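(* Let $u$ and $v$ be two prime words such that $u\le_{lex}v$, and let $\alpha$ and $\beta$ be two non-zero ordinals. Then $u^\alpha v^\beta=w^\gamma$ for some prime word $w$ and some ordinal $\gamma$, where either $w=v$ and $\gamma\in\{\beta,\alpha+\beta\}$, or $w=u^\alpha v^\beta$ and $\gamma=1$.
   Context: $A$ is a finite alphabet with a linear order $<_A$. Words are sequences of letters indexed by countable ordinals, $x^\alpha$ is the concatenation of $\alpha$ copies of $x$. A suffix of $x$ is $x[\gamma,|x|)$, proper if $0<\gamma<|x|$. Write $x<_{str}x'$ if there are letters $a<_Ab$ and words $y,z,z'$ with $x=yaz$, $x'=ybz'$; $x\le_{lex}x'$ iff $x$ is a prefix of $x'$ or $x<_{str}x'$. A word is primitive if $x=y^\alpha$ implies $\alpha=1$ and $y=x$; $w$ is prime if it is primitive and every proper suffix $z$ satisfies $w\le_{lex}z$. *)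

From Stdlib Require Import Arith Cantor Lia.
From mathcomp Require Import all_boot all_order zify.

Set Implicit Arguments.
Unset Strict Implicit.
Unset Printing Implicit Defensive.

(** Words are identified up to isomorphism ([word_iso]), which plays the role
  of equality of words. *)

Record word (A : Type) := Word {
  pos : Type;
  plt : pos -> pos -> Prop;
  plt_irr : forall i, ~ plt i i;
  plt_trans : forall i j k, plt i j -> plt j k -> plt i k;
  plt_total : forall i j, plt i j \/ i = j \/ plt j i;
  plt_wf : well_founded plt;
  pos_countable : exists f : pos -> nat, forall i j, f i = f j -> i = j;
  letter : pos -> A
}.

Arguments plt {A w} _ _.
Arguments letter {A w} _.

Definition tordinal := word unit.

Definition word_iso (A : Type) (x y : word A) : Prop :=
  exists (f : pos x -> pos y) (g : pos y -> pos x),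
    (forall i, g (f i) = i) /\ (forall j, f (g j) = j) /\
    (forall i j, plt i j <-> plt (f i) (f j)) /\
    (forall i, letter (f i) = letter i).

Definition empty_word (A : Type) : word A.
Proof.
refine (@Word A Empty_set (fun _ _ => False) _ _ _ _ _ _).
- intros; tauto.
- intros; tauto.
- by case.
- by move=> i; constructor.
- by exists (fun _ => 0) => i.
- by case.
Defined.

Definition letter_word (A : Type) (a : A) : word A.
Proof.
refine (@Word A unit (fun _ _ => False) _ _ _ _ _ (fun _ => a)).
- intros; tauto.
- intros; tauto.
- by move=> [] []; right; left.
- by move=> i; constructor.
- by exists (fun _ => 0) => [[] []].
Defined.

Definition ord_one : tordinal := letter_word tt.

Definition cat_lt (A : Type) (x y : word A) (p q : pos x + pos y) : Prop :=
  match p, q with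
  | inl i, inl j => plt i j
  | inl _, inr _ => True
  | inr _, inl _ => False
  | inr i, inr j => plt i j
  end.

Lemma cat_wf (A : Type) (x y : word A) : well_founded (cat_lt (x:=x) (y:=y)).
Proof.
have HL : forall i : pos x, Acc (@cat_lt A x y) (inl i).
  move=> i; elim: (plt_wf i) => {}i _ IH; constructor; case=> // j H; exact: IH.
case=> [i|i]; first exact: HL.
elim: (plt_wf i) => {}i _ IH; constructor; case=> [j|j] H; [exact: HL|exact: IH].
Qed.

Definition word_cat (A : Type) (x y : word A) : word A.
Proof.
refine (@Word A (pos x + pos y) (@cat_lt A x y) _ _ _ (@cat_wf A x y) _
  (fun p => match p with inl i => letter i | inr j => letter j end)).
- by case=> i /=; apply: plt_irr.
- case=> [i|i] [j|j] [k|k] //=; apply: plt_trans.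
- case=> [i|i] [j|j] /=; try by [left|right;right].
  + by case: (plt_total i j) => [H|[->|H]]; auto.
  + by case: (plt_total i j) => [H|[->|H]]; auto.
- case: (pos_countable x) => f Hf; case: (pos_countable y) => g Hg.
  exists (fun p => match p with inl i => 2 * f i | inr j => (2 * g j).+1 end).
  case=> [i|i] [j|j] H.
  + by rewrite (Hf i j) //; lia.
  + lia.
  + lia.
  + by rewrite (Hg i j) //; lia.
Defined.

(** Power [x^alpha]: concatenation of [alpha] copies of [x], i.e. positions
    [alpha x pos x] ordered lexicographically with the [alpha]-component first. *)
Definition pow_lt (A : Type) (x : word A) (al : tordinal) (p q : pos al * pos x) : Prop :=
  plt p.1 q.1 \/ (p.1 = q.1 /\ plt p.2 q.2).

Lemma pow_wf (A : Type) (x : word A) (al : tordinal) : well_founded (@pow_lt A x al).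
Proof.
case=> a i; elim: (plt_wf a) i => {}a _ IHa i.
elim: (plt_wf i) => {}i _ IHi; constructor; case=> b j [H|[/= E H]].
- exact: IHa.
- by rewrite /= in E; subst b; apply: IHi.
Qed.

Definition word_pow (A : Type) (x : word A) (al : tordinal) : word A.
Proof.
refine (@Word A (pos al * pos x) (@pow_lt A x al) _ _ _ (@pow_wf A x al) _
  (fun p => letter p.2)).
- by case=> a i [H|[_ H]]; apply: plt_irr H.
- case=> a i [b j] [c k] [H1|[/= E1 H1]] [H2|[/= E2 H2]]; rewrite /pow_lt /=.
  + by left; apply: plt_trans H2.
  + by left; rewrite -E2.
  + by left; rewrite E1.
  + by right; split; [rewrite E1 | apply: plt_trans H2].
- case=> a i [b j]; rewrite /pow_lt /=.
  case: (plt_total a b) => [H|[E|H]]; [by left; left| |by right; right; left].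
  subst b; case: (plt_total i j) => [H|[E|H]].
  + by left; right.
  + by right; left; subst.
  + by right; right; right.
- case: (pos_countable al) => f Hf; case: (pos_countable x) => g Hg.
  exists (fun p => Cantor.to_nat (f p.1, g p.2)).
  case=> a i [b j] H.
  have E := f_equal Cantor.of_nat H.
  rewrite !Cantor.cancel_of_to in E.
  by case: E => /Hf -> /Hg ->.
Defined.

Definition ord_add (al be : tordinal) : tordinal := word_cat al be.

Definition nonempty (A : Type) (x : word A) : Prop := inhabited (pos x).

Section Lex.
Variables (d : Order.disp_t) (A : orderType d).

Definition is_prefix (x x' : word A) : Prop :=
  exists z : word A, word_iso x' (word_cat x z).

Definition str_lt (x x' : word A) : Prop :=
  exists (y z z' : word A) (a b : A), (a < b)%O /\
    word_iso x (word_cat y (word_cat (letter_word a) z)) /\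
    word_iso x' (word_cat y (word_cat (letter_word b) z')).

Definition lex_le (x x' : word A) : Prop := is_prefix x x' \/ str_lt x x'.

(** [z] is a proper suffix of [x]: z = x[gamma,|x|) with 0 < gamma < |x|,
    i.e. x = y z with y and z both nonempty. *)
Definition proper_suffix (z x : word A) : Prop :=
  exists y : word A, nonempty y /\ nonempty z /\ word_iso x (word_cat y z).

Definition primitive (x : word A) : Prop :=
  forall (y : word A) (al : tordinal),
    word_iso x (word_pow y al) -> word_iso al ord_one /\ word_iso y x.

Definition prime_word (w : word A) : Prop :=
  primitive w /\ forall z : word A, proper_suffix z w -> lex_le w z.

End Lex.

(* If [u = v] then [u^al v^be = v^(al + be)].  Otherwise, comparing [v] with a
   power of [u] longer than [v] and using that both words are prime with
   [u <=lex v], one finds [v = u^mu t] with [u <str t].  Then [X = u^al v^be]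
   begins with [u^(al + mu) t].  If [al + mu = mu] the block [u^al] is absorbed
   and [X = v^be].  Otherwise [al + mu = mu + rho] with [rho > 0], so [X] begins
   with [u^mu u^rho] where [v] begins with [u^mu t], whence [X <str v].  A proper
   suffix of [X] starting in the [v^be] block begins with a suffix of [v], which
   is [>= v > X]; one starting in the [u^al] block reaches [t] after no more
   copies of [u] than [X] does, so it is [>= X] as well.  The same comparisons
   rule out [X = y^ga] with [ga > 1], so [X] is prime. *)

From mathcomp Require Import all_boot all_order.
From Stdlib Require Import Classical ClassicalEpsilon ProofIrrelevance Inverse_Image.
From Stdlib Require Import Setoid Morphisms.
Set Implicit Arguments.
Unset Strict Implicit.
Unset Printing Implicit Defensive.

Import Order.TTheory.

(** * Isomorphism of words *)

Section Isomorphism.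
Variable A : Type.
Implicit Types x y z : word A.

Lemma iso_of_strict_mono x y (f : pos x -> pos y) :
  (forall i j, plt i j -> plt (f i) (f j)) ->
  (forall j, exists i, f i = j) ->
  (forall i, letter (f i) = letter i) -> word_iso x y.
Proof.
move=> f_mono f_onto f_letter.
have f_refl i j : plt (f i) (f j) -> plt i j.
  case: (plt_total i j) => [//|[-> /plt_irr //|/f_mono ji ij]].
  by have /plt_irr := plt_trans ij ji.
have f_inj i j : f i = f j -> i = j.
  case: (plt_total i j) => [/f_mono + E|[//|/f_mono + E]]; rewrite E => /plt_irr [].
pose g j := proj1_sig (constructive_indefinite_description _ (f_onto j)).
have fK j : f (g j) = j.
  by rewrite /g; case: constructive_indefinite_description.
exists f, g; split; first by move=> i; apply: f_inj; rewrite fK.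
by split=> //; split=> // i j; split => [/f_mono|/f_refl].
Qed.

Lemma word_iso_refl x : word_iso x x.
Proof. by apply: (@iso_of_strict_mono _ _ id) => // j; exists j. Qed.

Lemma word_iso_sym x y : word_iso x y -> word_iso y x.
Proof.
case=> f [g [gf [fg [m l]]]].
apply: (@iso_of_strict_mono _ _ g).
- by move=> i j h; rewrite m !fg.
- by move=> j; exists (f j).
- by move=> j; rewrite -{2}(fg j) l.
Qed.

Lemma word_iso_trans x y z : word_iso x y -> word_iso y z -> word_iso x z.
Proof.
case=> f [g [gf [fg [m l]]]]; case=> f' [g' [gf' [fg' [m' l']]]].
apply: (@iso_of_strict_mono _ _ (fun i => f' (f i))).
- by move=> i j h; rewrite -m' -m.
- by move=> k; exists (g (g' k)); rewrite fg fg'.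
- by move=> i; rewrite l' l.
Qed.

Lemma word_cat_iso x x' y y' :
  word_iso x x' -> word_iso y y' -> word_iso (word_cat x y) (word_cat x' y').
Proof.
case=> f [g [gf [fg [m l]]]]; case=> f' [g' [gf' [fg' [m' l']]]].
apply: (@iso_of_strict_mono (word_cat x y) (word_cat x' y')
   (fun p => match p with inl i => inl (f i) | inr j => inr (f' j) end)).
- by case=> [i|i] [j|j] //= h; [rewrite -m|rewrite -m'].
- case=> [i|i]; [exists (inl (g i)) | exists (inr (g' i))]; by rewrite /= ?fg ?fg'.
- by case=> [i|i] /=.
Qed.

Lemma word_pow_iso x x' (al al' : tordinal) :
  word_iso x x' -> word_iso al al' -> word_iso (word_pow x al) (word_pow x' al').
Proof.
case=> f [g [gf [fg [m l]]]]; case=> f' [g' [gf' [fg' [m' l']]]].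
apply: (@iso_of_strict_mono (word_pow x al) (word_pow x' al') (fun p => (f' p.1, f p.2))).
- case=> a i [b j] [h|[/= E h]]; first by left => /=; rewrite -m'.
  by right => /=; split; [rewrite E | rewrite -m].
- by case=> a i; exists (g' a, g i); rewrite /= fg fg'.
- by case=> a i /=.
Qed.

Lemma word_catA x y z :
  word_iso (word_cat (word_cat x y) z) (word_cat x (word_cat y z)).
Proof.
apply: (@iso_of_strict_mono (word_cat (word_cat x y) z) (word_cat x (word_cat y z))
   (fun p => match p with inl (inl i) => inl i | inl (inr j) => inr (inl j)
               | inr k => inr (inr k) end)).
- by case=> [[i|i]|i] [[j|j]|j].
- by case=> [i|[i|i]]; [exists (inl (inl i)) | exists (inl (inr i)) | exists (inr i)].
- by case=> [[i|i]|i].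
Qed.

Lemma word_pow_add x (al be : tordinal) :
  word_iso (word_pow x (ord_add al be)) (word_cat (word_pow x al) (word_pow x be)).
Proof.
apply: (@iso_of_strict_mono (word_pow x (ord_add al be))
  (word_cat (word_pow x al) (word_pow x be))
   (fun p => match p.1 with inl a => inl (a, p.2) | inr b => inr (b, p.2) end)).
- case=> [[a|a] i] [[b|b] j] [h|[/= E h]] //=; first [by left|by case: E => ->; right].
- by case=> [[a i]|[a i]]; [exists (inl a, i) | exists (inr a, i)].
- by case=> [[a|a] i].
Qed.

Lemma word_pow1 x : word_iso (word_pow x ord_one) x.
Proof.
apply: (@iso_of_strict_mono (word_pow x ord_one) x (fun p => p.2)).
- by case=> a i [b j] [h|[/= E h]].
- by move=> j; exists (tt, j).
- by case.
Qed.

Lemma word_iso_empty z : ~ nonempty z -> word_iso z (empty_word A).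
Proof.
move=> hz; have F : pos z -> False by move=> i; apply: hz; constructor.
apply: (@iso_of_strict_mono _ _ (fun i => match F i with end)).
- by move=> i; case: (F i).
- by case.
- by move=> i; case: (F i).
Qed.

Lemma word_cat_empty_l x z : ~ nonempty z -> word_iso (word_cat z x) x.
Proof.
move=> hz; have F : pos z -> False by move=> i; apply: hz; constructor.
apply: (@iso_of_strict_mono (word_cat z x) x
   (fun p => match p with inl i => match F i with end | inr j => j end)).
- by case=> [i|i] [j|j] //; case: (F i).
- by move=> j; exists (inr j).
- by case=> [i|i] //; case: (F i).
Qed.

Lemma word_cat_empty_r x z : ~ nonempty z -> word_iso (word_cat x z) x.
Proof.
move=> hz; have F : pos z -> False by move=> i; apply: hz; constructor.
apply: (@iso_of_strict_mono (word_cat x z) x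
   (fun p => match p with inr i => match F i with end | inl j => j end)).
- by case=> [i|i] [j|j] //; case: (F i) || case: (F j).
- by move=> j; exists (inl j).
- by case=> [i|i] //; case: (F i).
Qed.

Lemma empty_word_empty : ~ nonempty (empty_word A).
Proof. by case; case. Qed.

Lemma nonempty_iso x y : word_iso x y -> nonempty x -> nonempty y.
Proof. by case=> f _ [i]; constructor; exact: f i. Qed.

Lemma nonempty_catl x y : nonempty x -> nonempty (word_cat x y).
Proof. by case=> i; constructor; exact: inl i. Qed.

Lemma nonempty_catr x y : nonempty y -> nonempty (word_cat x y).
Proof. by case=> i; constructor; exact: inr i. Qed.

Lemma nonempty_pow x al : nonempty x -> nonempty al -> nonempty (word_pow x al).
Proof. by case=> i [a]; constructor; exact: (a, i). Qed.

Lemma nonempty_powP x al : nonempty (word_pow x al) -> nonempty x /\ nonempty al.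
Proof. by case=> [[a i]]; split; constructor. Qed.

Lemma nonempty_letter (a : A) : nonempty (letter_word a).
Proof. by constructor; exact: tt. Qed.

End Isomorphism.

Lemma nonempty_one : nonempty ord_one.
Proof. exact: nonempty_letter. Qed.

#[global] Instance word_iso_equiv A : Equivalence (@word_iso A).
Proof. split; [exact: word_iso_refl|exact: word_iso_sym|exact: word_iso_trans]. Qed.

#[global] Instance word_cat_proper A :
  Proper (@word_iso A ==> @word_iso A ==> @word_iso A) (@word_cat A).
Proof. by move=> x x' h y y' h'; apply: word_cat_iso. Qed.

#[global] Instance word_pow_proper A :
  Proper (@word_iso A ==> @word_iso unit ==> @word_iso A) (@word_pow A).
Proof. by move=> x x' h y y' h'; apply: word_pow_iso. Qed.

#[global] Instance nonempty_proper A : Proper (@word_iso A ==> iff) (@nonempty A).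
Proof. by move=> x y h; split; apply: nonempty_iso => //; symmetry. Qed.

#[global] Hint Resolve word_iso_refl empty_word_empty : core.

(** * Subwords and cuts *)

Lemma proj1_sig_inj (T : Type) (P : T -> Prop) (a b : {x | P x}) :
  proj1_sig a = proj1_sig b -> a = b.
Proof. by case: a => x hx; case: b => y hy /= E; subst; f_equal; apply: proof_irrelevance. Qed.

Section Subwords.
Variable A : Type.
Implicit Types x y z : word A.

Definition subword x (P : pos x -> Prop) : word A.
Proof.
refine (@Word A {i : pos x | P i} (fun a b => plt (proj1_sig a) (proj1_sig b)) _ _ _ _ _
  (fun a => letter (proj1_sig a))).
- by move=> [i hi] /=; apply: plt_irr.
- by move=> [i hi] [j hj] [k hk] /=; apply: plt_trans.
- move=> a b; case: (plt_total (proj1_sig a) (proj1_sig b)) => [h|[h|h]];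
    [left|right; left|right; right] => //; exact: proj1_sig_inj.
- by apply: (wf_inverse_image _ _ plt (fun a => proj1_sig a)); apply: plt_wf.
- case: (pos_countable x) => f hf; exists (fun a => f (proj1_sig a)) => a b /hf.
  exact: proj1_sig_inj.
Defined.

Definition ple x (i j : pos x) := plt i j \/ i = j.

Lemma ple_subword x (P : pos x -> Prop) (a b : pos (subword P)) :
  ple a b <-> ple (proj1_sig a) (proj1_sig b).
Proof.
by split => -[h|h]; [left|right; rewrite h|left|right; apply: proj1_sig_inj].
Qed.

Lemma plt_min x (P : pos x -> Prop) :
  (exists i, P i) -> exists i, P i /\ forall j, P j -> ple i j.
Proof.
move=> [i0 h0]; apply: NNPP => N.
suff : forall i, ~ P i by move/(_ i0).
move=> i; elim: (plt_wf i) => {}i _ IH hi.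
apply: N; exists i; split => // j hj.
case: (plt_total i j) => [h|[h|h]]; [by left|by right|].
by case: (IH j h hj).
Qed.

Lemma strict_mono_nondecreasing x (f : pos x -> pos x) :
  (forall i j, plt i j -> plt (f i) (f j)) -> forall i, ~ plt (f i) i.
Proof.
move=> f_mono i; elim: (plt_wf i) => {}i _ IH h.
exact: (IH _ h (f_mono _ _ h)).
Qed.

Lemma no_iso_cat_mid x P Z : word_iso x (word_cat P (word_cat x Z)) -> ~ nonempty Z.
Proof.
move=> /word_iso_sym [g [f [fg [gf [m l]]]]] [z0].
pose h i := g (inr (inl i)).
have h_mono i j : plt i j -> plt (h i) (h j) by move=> hij; rewrite /h -m.
by case: (@strict_mono_nondecreasing _ _ h_mono (g (inr (inr z0)))); rewrite /h -m.
Qed.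

Lemma no_iso_cat_r x Z : word_iso x (word_cat x Z) -> ~ nonempty Z.
Proof.
move=> H; apply: (@no_iso_cat_mid x (empty_word A)).
by rewrite word_cat_empty_l //.
Qed.

Lemma subword_ext x (P Q : pos x -> Prop) :
  (forall i, P i <-> Q i) -> word_iso (subword P) (subword Q).
Proof.
move=> H; apply: (@iso_of_strict_mono _ (subword P) (subword Q)
  (fun a => exist _ (proj1_sig a) (proj1 (H _) (proj2_sig a)))) => // b.
by exists (exist _ (proj1_sig b) (proj2 (H _) (proj2_sig b))); apply: proj1_sig_inj.
Qed.

Lemma subword_all x (P : pos x -> Prop) : (forall i, P i) -> word_iso (subword P) x.
Proof.
move=> H; apply: (@iso_of_strict_mono _ (subword P) x (fun a => proj1_sig a)) => // j.
by exists (exist _ j (H j)).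
Qed.

Lemma subword_transport x y (f : pos x -> pos y) (g : pos y -> pos x) :
  (forall i, g (f i) = i) -> (forall j, f (g j) = j) ->
  (forall i j, plt i j <-> plt (f i) (f j)) -> (forall i, letter (f i) = letter i) ->
  forall P, word_iso (subword P) (subword (fun j => P (g j))).
Proof.
move=> gf fg m l P.
apply: (@iso_of_strict_mono _ (subword P) (subword (fun j => P (g j)))
   (fun a => exist _ (f (proj1_sig a)) (eq_rect_r P (proj2_sig a) (gf _)))).
- by move=> a b /= h; rewrite -m.
- move=> b; exists (exist _ (g (proj1_sig b)) (proj2_sig b)).
  by apply: proj1_sig_inj => /=; apply: fg.
- by move=> a; apply: l.
Qed.

Lemma subword_subword x (D R : pos x -> Prop) :
  word_iso (subword (fun b : pos (subword D) => R (proj1_sig b)))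
           (subword (fun i => D i /\ R i)).
Proof.
apply: (@iso_of_strict_mono _ (subword (fun b : pos (subword D) => R (proj1_sig b)))
   (subword (fun i => D i /\ R i))
   (fun b => exist _ (proj1_sig (proj1_sig b))
               (conj (proj2_sig (proj1_sig b)) (proj2_sig b)))) => //.
move=> [i [hD hR]]; exists (exist _ (exist _ i hD) hR); exact: proj1_sig_inj.
Qed.

Definition downclosed x (D : pos x -> Prop) := forall i j, plt i j -> D j -> D i.

Lemma downclosed_least x (D : pos x -> Prop) : downclosed D -> ~ (forall i, D i) ->
  exists i0, forall i, D i <-> plt i i0.
Proof.
move=> cD /not_all_ex_not /plt_min [i0 [Di0 min_i0]]; exists i0 => i; split => h.
- case: (plt_total i i0) => [//|[E|/cD /(_ h) //]].
  by rewrite E in h.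
- apply: NNPP => /min_i0 [h'|E]; last by move: h; rewrite E => /plt_irr.
  by have /plt_irr := plt_trans h h'.
Qed.

Lemma subword_cut x (E D : pos x -> Prop) : downclosed D ->
  word_iso (subword E)
    (word_cat (subword (fun i => E i /\ D i)) (subword (fun i => E i /\ ~ D i))).
Proof.
move=> cD; symmetry.
apply: (@iso_of_strict_mono _ (word_cat (subword (fun i => E i /\ D i))
  (subword (fun i => E i /\ ~ D i))) (subword E)
  (fun p => match p with inl a => exist _ (proj1_sig a) (proj1 (proj2_sig a))
                     | inr a => exist _ (proj1_sig a) (proj1 (proj2_sig a)) end)).
- case=> [[i [hEi hDi]]|[i [hEi hDi]]] [[j [hEj hDj]]|[j [hEj hDj]]] //= _.
  case: (plt_total i j) => [h|[h|h]] //; first by subst.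
  by case: hDj; apply: cD hDi.
- move=> [i hE]; case: (classic (D i)) => h.
  + by exists (inl (exist _ i (conj hE h))); apply: proj1_sig_inj.
  + by exists (inr (exist _ i (conj hE h))); apply: proj1_sig_inj.
- by case=> [[i ?]|[i ?]].
Qed.

Lemma subword_point x (q : pos x) :
  word_iso (subword (fun j => j = q)) (letter_word (letter q)).
Proof.
symmetry; apply: (@iso_of_strict_mono _ (letter_word (letter q)) (subword (fun j => j = q))
  (fun _ => exist _ q erefl)) => // -[j E].
by exists tt; apply: proj1_sig_inj.
Qed.

Lemma ple_downclosed x (q : pos x) : downclosed (fun j => ple j q).
Proof. by move=> i j h [h'|<-]; left; first exact: plt_trans h h'. Qed.

Lemma plt_downclosed x (q : pos x) : downclosed (fun j => plt j q).
Proof. by move=> i j h h'; exact: plt_trans h h'. Qed.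

Lemma subword_ple x (q : pos x) :
  word_iso (subword (fun j => ple j q))
           (word_cat (subword (fun j => plt j q)) (letter_word (letter q))).
Proof.
apply: word_iso_trans (subword_cut _ (@plt_downclosed x q)) _.
apply: word_cat_iso.
- by apply: subword_ext => j; split => [[]|h] //; split => //; left.
- rewrite -subword_point; apply: subword_ext => j; split; first by move=> [[h|h] h'].
  by move=> ->; split; [right|apply: plt_irr].
Qed.

Lemma word_split_at x (q : pos x) :
  word_iso x (word_cat (subword (fun j => plt j q))
                       (word_cat (letter_word (letter q)) (subword (fun j => plt q j)))).
Proof.
apply: word_iso_trans (word_iso_sym (subword_all (fun _ => I))) _.
apply: word_iso_trans (subword_cut _ (@plt_downclosed x q)) _.
apply: word_cat_iso; first by apply: subword_ext => j; split => [[]|h].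
apply: word_iso_trans (subword_cut _ (@ple_downclosed x q)) _.
apply: word_cat_iso.
- rewrite -subword_point; apply: subword_ext => j; split; first by move=> [[_ h] [h'|h']].
  by move=> ->; split; [split => //; apply: plt_irr|right].
- apply: subword_ext => j; split.
  + move=> [[_ h] h']; case: (plt_total j q) => [h1|[h1|h1]] //.
    by case: h'; right.
  + move=> h; split; [split => // h'|move=> [h'|h']].
    * by have /plt_irr := plt_trans h h'.
    * by have /plt_irr := plt_trans h h'.
    * by move: h; rewrite h' => /plt_irr.
Qed.

Lemma nonempty_first_letter x : nonempty x ->
  exists a x', word_iso x (word_cat (letter_word a) x').
Proof.
move=> hx; have [k0 [_ min_k0]] : exists k0 : pos x, True /\ forall j, True -> ple k0 j.
  by apply: plt_min; case: hx => i; exists i.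
exists (letter k0), (subword (fun k' => plt k0 k')).
rewrite {1}(word_split_at k0) word_cat_empty_l // => -[[j hj]].
case: (min_k0 j I) => [/(plt_trans hj)|E]; first exact: plt_irr.
by move: hj; rewrite E => /plt_irr.
Qed.

Definition in_left x y (p : pos (word_cat x y)) := exists i, p = inl i.

Lemma in_left_downclosed x y : downclosed (@in_left x y).
Proof. by move=> [i|i] [j|j] //= _ [k E] //; exists i. Qed.

Lemma subword_left x y (E : pos (word_cat x y) -> Prop) :
  (forall i, E (inl i)) -> word_iso (subword (fun p => E p /\ in_left p)) x.
Proof.
move=> hE; symmetry.
apply: (@iso_of_strict_mono _ x (subword (fun p => E p /\ in_left p))
  (fun i => exist _ (inl i) (conj (hE i) (ex_intro _ i erefl)))) => //.
move=> [p hp]; case: (hp) => hEp [i E']; exists i; apply: proj1_sig_inj => /=.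
by rewrite E'.
Qed.

Lemma subword_right x y (E : pos (word_cat x y) -> Prop) :
  (forall i, E (inr i)) -> word_iso (subword (fun p => E p /\ ~ in_left p)) y.
Proof.
move=> hE; symmetry.
have H i : ~ @in_left x y (inr i) by move=> [j E'].
apply: (@iso_of_strict_mono _ y (subword (fun p => E p /\ ~ in_left p))
  (fun i => exist _ (inr i) (conj (hE i) (H i)))) => //.
move=> [[i|i] hp]; first by case: (proj2 hp); exists i.
by exists i; apply: proj1_sig_inj.
Qed.

End Subwords.

(** * Levi's lemma and the lexicographic order *)

Section Levi.
Variable A : Type.
Implicit Types x y z M N K P S Y Z : word A.

Lemma word_cat_levi_oriented (P1 S1 P2 S2 : word A)
    (f : pos (word_cat P1 S1) -> pos (word_cat P2 S2)) g :
  (forall i, g (f i) = i) -> (forall j, f (g j) = j) ->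
  (forall i j, plt i j <-> plt (f i) (f j)) -> (forall i, letter (f i) = letter i) ->
  (forall p, in_left (g p) -> in_left p) ->
  exists M, word_iso P2 (word_cat P1 M) /\ word_iso S1 (word_cat M S2).
Proof.
move=> gf fg m l gl.
have T := subword_transport gf fg m l.
have g_mono a b : plt a b -> plt (g a) (g b) by move=> h; rewrite m !fg.
have cD : downclosed (fun p => in_left (g p)).
  by move=> a b h hb; apply: (@in_left_downclosed _ P1 S1 _ (g b)) => //; apply: g_mono.
set Y := word_cat P2 S2.
exists (subword (fun p : pos Y => (True /\ in_left p) /\ ~ in_left (g p))); split.
- rewrite -{1}(@subword_left _ P2 S2 (fun _ => True)) //.
  rewrite (subword_cut (fun p : pos Y => True /\ in_left p) cD).
  apply: word_cat_iso => //.
  apply: word_iso_trans _ (@subword_left _ P1 S1 (fun _ => True) (fun _ => I)).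
  symmetry; rewrite T; apply: subword_ext => p; split; last by case.
  by move=> [_ h]; split; [split => //; apply: gl|].
- apply: word_iso_trans (word_iso_sym (@subword_right _ P1 S1 (fun _ => True) (fun _ => I))) _.
  rewrite T (subword_cut _ (@in_left_downclosed _ P2 S2)).
  apply: word_cat_iso; first by apply: subword_ext => p; split => -[[_ h1] h2].
  apply: word_iso_trans _ (@subword_right _ P2 S2 (fun _ => True) (fun _ => I)).
  apply: subword_ext => p; split; first by case=> [[_ _] h].
  by move=> [_ h]; split => //; split => // /gl.
Qed.

Lemma word_cat_levi (P1 S1 P2 S2 : word A) :
  word_iso (word_cat P1 S1) (word_cat P2 S2) ->
  exists M, (word_iso P2 (word_cat P1 M) /\ word_iso S1 (word_cat M S2)) \/
            (word_iso P1 (word_cat P2 M) /\ word_iso S2 (word_cat M S1)).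
Proof.
case=> f [g [gf [fg [m l]]]].
case: (classic (forall p, in_left (g p) -> in_left p)) => gl.
  by case: (word_cat_levi_oriented gf fg m l gl) => M h; exists M; left.
have fl (q : pos (word_cat P1 S1)) : in_left (f q) -> in_left q.
  move=> hq; apply: NNPP => nq; apply: gl => p hp; apply: NNPP => np.
  case: q hq nq => [q|s] hq nq; first by apply: nq; exists q.
  case: p hp np => [p'|s'] hp np; first by apply: np; exists p'.
  case: hq hp => p E [p1 E1].
  have : plt (g (inr s')) (inr s) by rewrite E1.
  by rewrite m fg E.
have m' i j : plt i j <-> plt (g i) (g j) by rewrite m !fg.
have l' j : letter (g j) = letter j by rewrite -{2}(fg j) l.
by case: (word_cat_levi_oriented fg gf m' l' fl) => M h; exists M; right.
Qed.

(* [is_prefix] is this notion at an ordered alphabet, convertibly. *)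
Definition word_prefix x y := exists z, word_iso y (word_cat x z).

#[global] Instance word_prefix_proper :
  Proper (@word_iso A ==> @word_iso A ==> iff) word_prefix.
Proof.
by move=> x x' h y y' h'; split => -[z hz]; exists z; rewrite ?h ?h' // -h -h'.
Qed.

Lemma word_prefix_refl x : word_prefix x x.
Proof. by exists (empty_word A); rewrite word_cat_empty_r //. Qed.

Lemma word_prefix_trans x y z : word_prefix x y -> word_prefix y z -> word_prefix x z.
Proof. by move=> [a ha] [b hb]; exists (word_cat a b); rewrite hb ha word_catA. Qed.

Lemma word_prefix_antisym x y : word_prefix x y -> word_prefix y x -> word_iso x y.
Proof.
move=> [a ha] [b hb].
have /no_iso_cat_r hn : word_iso x (word_cat x (word_cat a b)) by rewrite -word_catA -ha.
by rewrite ha word_cat_empty_r // => h; apply: hn; apply: nonempty_catl.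
Qed.

Lemma letter_word_cat a M K :
  word_iso (letter_word a) (word_cat M K) -> nonempty M ->
  word_iso M (letter_word a) /\ ~ nonempty K.
Proof.
move=> H [m0].
have hK : ~ nonempty K.
  move=> [k0]; case: (word_iso_sym H) => g [f [fg [gf _]]].
  have : g (inl m0) = g (inr k0) by case: (g (inl m0)); case: (g (inr k0)).
  by move/(f_equal f); rewrite !fg.
by split => //; rewrite H word_cat_empty_r.
Qed.

Lemma first_letter_prefix a Z M N :
  word_iso (word_cat (letter_word a) Z) (word_cat M N) -> nonempty M ->
  exists M', word_iso M (word_cat (letter_word a) M').
Proof.
move=> /word_cat_levi [K [[h1 h2]|[h1 h2]]] hM; first by exists K.
case: (letter_word_cat h1 hM) => h3 h4.
by exists (empty_word A); rewrite h3 word_cat_empty_r //.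
Qed.

Lemma first_letter_inj a b Z (Z' : word A) :
  word_iso (word_cat (letter_word a) Z) (word_cat (letter_word b) Z') -> a = b.
Proof.
case=> f [g [gf [fg [m l]]]].
case E: (f (inl tt)) => [[]|z]; first by have := l (inl tt); rewrite E.
case E2: (g (inl tt)) => [[]|z2].
  by move: E2; move/(f_equal f); rewrite fg E.
have : plt (inl tt : pos (word_cat (letter_word a) Z)) (g (inl tt)) by rewrite E2.
by rewrite m fg E.
Qed.

Lemma letter_after_prefix_inj Y a b Z (Z' : word A) :
  word_iso (word_cat Y (word_cat (letter_word a) Z))
           (word_cat Y (word_cat (letter_word b) Z')) -> a = b.
Proof.
move=> /word_cat_levi [M [[h1 h2]|[h1 h2]]].
- case: (classic (nonempty M)) => hM; first by case: (no_iso_cat_r h1 hM).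
  by apply: (@first_letter_inj _ _ Z Z'); rewrite h2 word_cat_empty_l.
- case: (classic (nonempty M)) => hM; first by case: (no_iso_cat_r h1 hM).
  by apply: esym; apply: (@first_letter_inj _ _ Z' Z); rewrite h2 word_cat_empty_l.
Qed.

End Levi.

Section StrictLex.
Variables (d : Order.disp_t) (A : orderType d).
Local Open Scope order_scope.
Implicit Types x y z : word A.

#[global] Instance str_lt_proper : Proper (@word_iso A ==> @word_iso A ==> iff) (@str_lt d A).
Proof.
move=> x x' h y y' h'; split => -[Y [Z [Z' [a [b [hab [h1 h2]]]]]]];
  exists Y, Z, Z', a, b; by rewrite ?h ?h' // -?h -?h'.
Qed.

Lemma str_lt_letters (Y Z Z' : word A) (a b : A) : a < b ->
  str_lt (word_cat Y (word_cat (letter_word a) Z)) (word_cat Y (word_cat (letter_word b) Z')).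
Proof. by move=> h; exists Y, Z, Z', a, b. Qed.

Lemma str_lt_cat x y z z' : str_lt x y -> str_lt (word_cat x z) (word_cat y z').
Proof.
move=> [Y [Z [Z' [a [b [hab [h1 h2]]]]]]].
exists Y, (word_cat Z z), (word_cat Z' z'), a, b.
by rewrite h1 h2 !word_catA.
Qed.

Lemma str_lt_catr x y z : str_lt x y -> str_lt x (word_cat y z).
Proof.
move=> /(str_lt_cat (empty_word A) z).
by rewrite word_cat_empty_r //.
Qed.

Lemma str_lt_catl x y z : str_lt x y -> str_lt (word_cat z x) (word_cat z y).
Proof.
move=> [Y [Z [Z' [a [b [hab [h1 h2]]]]]]].
exists (word_cat z Y), Z, Z', a, b.
by rewrite h1 h2 !word_catA.
Qed.

Lemma str_lt_prefix x y : str_lt x y -> ~ word_prefix y x.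
Proof.
move=> [Y [Z [Z' [a [b [hab [h1 h2]]]]]]] [w hw].
suff E : a = b by move: hab; rewrite E ltxx.
apply: (@letter_after_prefix_inj _ Y a b Z (word_cat Z' w)).
by rewrite -h1 hw h2 !word_catA.
Qed.

Lemma str_lt_irr x : ~ str_lt x x.
Proof. by move=> /str_lt_prefix; apply; apply: word_prefix_refl. Qed.

Lemma str_lt_trans x y z : str_lt x y -> str_lt y z -> str_lt x z.
Proof.
move=> [Y1 [Z1 [Z1' [a [b [hab [h1 h2]]]]]]] [Y2 [Z2 [Z2' [c [e [hce [h3 h4]]]]]]].
have : word_iso (word_cat Y1 (word_cat (letter_word b) Z1'))
                (word_cat Y2 (word_cat (letter_word c) Z2)) by rewrite -h2 -h3.
case/word_cat_levi => M [[k1 k2]|[k1 k2]].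
- case: (classic (nonempty M)) => hM.
  + case: (first_letter_prefix k2 hM) => M' hM'.
    exists Y1, Z1, (word_cat M' (word_cat (letter_word e) Z2')), a, b.
    by rewrite h1 h4 k1 hM' !word_catA.
  + have E : b = c by apply: (@first_letter_inj _ _ _ Z1' Z2); rewrite k2 word_cat_empty_l.
    exists Y1, Z1, Z2', a, e; split; first by rewrite (lt_trans hab) // E.
    by rewrite h1 h4 k1 (word_cat_empty_r Y1 hM).
- case: (classic (nonempty M)) => hM.
  + case: (first_letter_prefix k2 hM) => M' hM'.
    exists Y2, (word_cat M' (word_cat (letter_word a) Z1)), Z2', c, e.
    by rewrite h1 h4 k1 hM' !word_catA.
  + have E : c = b by apply: (@first_letter_inj _ _ _ Z2 Z1'); rewrite k2 word_cat_empty_l.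
    exists Y2, Z1, Z2', a, e; split; first by rewrite (lt_trans hab) // -E.
    by rewrite h1 h4 k1 (word_cat_empty_r Y2 hM).
Qed.

End StrictLex.

Section Comparability.
Variable A : Type.
Implicit Types x y : word A.

Lemma word_iso_maps x y : word_iso x y ->
  exists (f : pos x -> pos y) (g : pos y -> pos x),
    (forall i, g (f i) = i) /\ (forall j, f (g j) = j) /\
    (forall i j, plt i j <-> plt (f i) (f j)) /\ (forall i, letter (f i) = letter i) /\
    (forall i j, plt i j <-> plt (g i) (g j)).
Proof.
case=> f [g [gf [fg [m l]]]]; exists f, g; do 4 (split => //).
by move=> i j; rewrite m !fg.
Qed.

Definition upto_top x (i : pos x) : pos (subword (fun k => ple k i)) :=
  exist _ i (or_intror erefl).

Lemma iso_upto_top x y (i : pos x) (j : pos y)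
    (f : pos (subword (fun k => ple k i)) -> pos (subword (fun k => ple k j))) g :
  (forall a, g (f a) = a) -> (forall b, f (g b) = b) ->
  (forall a b, plt a b <-> plt (f a) (f b)) -> f (upto_top i) = upto_top j.
Proof.
move=> gf fg m; apply: proj1_sig_inj => /=.
case: (proj2_sig (f (upto_top i))) => // h; exfalso.
have : plt (f (upto_top i)) (upto_top j) by [].
rewrite -[upto_top j]fg -m => h1.
have h1' : plt i (proj1_sig (g (upto_top j))) := h1.
case: (proj2_sig (g (upto_top j))) => h2.
- by have /plt_irr := plt_trans h1' h2.
- by move: h1; rewrite /= h2 => /plt_irr.
Qed.

(* At most one [j] matches a given [i], and the matched pairs make up the
   longest common prefix of [x] and [y]. *)
Definition iso_upto x y (i : pos x) (j : pos y) :=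
  word_iso (subword (fun k => ple k i)) (subword (fun k => ple k j)).

Lemma iso_upto_letter x y i j : @iso_upto x y i j -> letter i = letter j.
Proof.
case=> f [g [gf [fg [m l]]]].
by have := l (upto_top i); rewrite (iso_upto_top gf fg m).
Qed.

Lemma upto_rigid_lt y (j j' : pos y) : plt j j' ->
  ~ word_iso (subword (fun k => ple k j)) (subword (fun k => ple k j')).
Proof.
move=> hjj H.
have C := subword_cut (fun k => ple k j') (@ple_downclosed _ y j).
have E1 : word_iso (subword (fun k => ple k j' /\ ple k j)) (subword (fun k => ple k j)).
  apply: subword_ext => k; split; first by case.
  move=> h; split => //; left; case: h => [h|->] //; exact: plt_trans h hjj.
rewrite E1 -H in C.
apply: (no_iso_cat_r C); constructor; exists j'; split; first by right.
case=> [h|h]; first by have /plt_irr := plt_trans h hjj.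
by move: hjj; rewrite h => /plt_irr.
Qed.

Lemma iso_upto_fun x y i j j' : @iso_upto x y i j -> iso_upto i j' -> j = j'.
Proof.
move=> h h'; have H := word_iso_trans (word_iso_sym h) h'.
case: (plt_total j j') => [lt|[//|lt]].
- by case: (upto_rigid_lt lt H).
- by case: (upto_rigid_lt lt (word_iso_sym H)).
Qed.

Lemma iso_upto_lt x y i j i' : @iso_upto x y i j -> plt i' i ->
  exists j', plt j' j /\ iso_upto i' j'.
Proof.
move=> H hi.
case: (word_iso_maps H) => f [g [gf [fg [m [l m']]]]].
pose a := (exist _ i' (or_introl hi) : pos (subword (fun k => ple k i))).
have lt_fa : plt (proj1_sig (f a)) j.
  have : plt a (upto_top i) by [].
  by rewrite m (iso_upto_top gf fg m).
exists (proj1_sig (f a)); split => //.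
have below (z : word A) (w P : pos z) :
    plt w P -> word_iso (subword (fun k => ple k P /\ ple k w)) (subword (fun k => ple k w)).
  move=> hw; apply: subword_ext => k; split; first by case.
  by move=> h; split => //; left; case: h => [h|->] //; exact: plt_trans h hw.
rewrite /iso_upto -(below _ _ _ hi) -(below _ _ _ lt_fa) -!subword_subword.
rewrite (subword_transport gf fg m l).
apply: subword_ext => c.
have -> : i' = proj1_sig (g (f a)) by rewrite gf.
rewrite -!ple_subword; split => -[h|h].
- by left; rewrite m'.
- by right; rewrite -[c]fg h fg.
- by left; rewrite -m'.
- by right; rewrite h.
Qed.

Lemma iso_upto_mono x y i1 j1 i2 j2 :
  @iso_upto x y i1 j1 -> iso_upto i2 j2 -> plt i1 i2 -> plt j1 j2.
Proof.
move=> h1 h2 /(iso_upto_lt h2) [j' [hj h']].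
by rewrite (iso_upto_fun h1 h').
Qed.

Definition matched_l x y (i : pos x) := exists j : pos y, iso_upto i j.
Definition matched_r x y (j : pos y) := exists i : pos x, iso_upto i j.

Lemma matched_l_downclosed x y : downclosed (@matched_l x y).
Proof.
move=> i' i h [j hs]; case: (iso_upto_lt hs h) => j' [_ h']; by exists j'.
Qed.

Lemma matched_r_downclosed x y : downclosed (@matched_r x y).
Proof.
move=> j' j h [i hs]; case: (iso_upto_lt (word_iso_sym hs) h) => i' [_ h'].
by exists i'; apply: word_iso_sym.
Qed.

Lemma subword_matched x y :
  word_iso (subword (@matched_l x y)) (subword (@matched_r x y)).
Proof.
pose J (a : pos (subword (@matched_l x y))) :=
  proj1_sig (constructive_indefinite_description _ (proj2_sig a)).
have hJ a : iso_upto (proj1_sig a) (J a).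
  by rewrite /J; case: constructive_indefinite_description.
apply: (@iso_of_strict_mono _ _ (subword (@matched_r x y))
  (fun a => exist _ (J a) (ex_intro _ (proj1_sig a) (hJ a)))).
- by move=> a b h /=; apply: iso_upto_mono (hJ a) (hJ b) h.
- move=> [j [i hs]]; exists (exist _ i (ex_intro _ j hs)); apply: proj1_sig_inj => /=.
  exact: (iso_upto_fun (hJ (exist _ i (ex_intro _ j hs))) hs).
- by move=> a /=; rewrite -(iso_upto_letter (hJ a)).
Qed.

Lemma matched_all_prefix x y : (forall i, @matched_l x y i) -> word_prefix x y.
Proof.
move=> hx; exists (subword (fun k => True /\ ~ @matched_r x y k)).
rewrite -{1}(subword_all (fun _ : pos y => I)) (subword_cut _ (@matched_r_downclosed x y)).
apply: word_cat_iso => //.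
apply: word_iso_trans _ (subword_all hx).
by rewrite subword_matched; apply: subword_ext => k; split => //; case.
Qed.

Lemma word_trichotomy x y : word_prefix x y \/ word_prefix y x \/
  exists (Y Z Z' : word A) (a b : A), a <> b /\
    word_iso x (word_cat Y (word_cat (letter_word a) Z)) /\
    word_iso y (word_cat Y (word_cat (letter_word b) Z')).
Proof.
case: (classic (forall i, @matched_l x y i)) => [/matched_all_prefix|hx]; first by left.
case: (classic (forall j, @matched_r x y j)) => hy.
  right; left; apply: matched_all_prefix => i.
  by case: (hy i) => j h; exists j; apply: word_iso_sym.
right; right.
case: (downclosed_least (@matched_l_downclosed x y) hx) => i0 eD.
case: (downclosed_least (@matched_r_downclosed x y) hy) => j0 eE.
have M : word_iso (subword (fun k => plt k i0)) (subword (fun k => plt k j0)).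
  by rewrite -(subword_ext eD) -(subword_ext eE) subword_matched.
have hl : letter i0 <> letter j0.
  move=> hl; have /eD /plt_irr // : matched_l y i0.
  by exists j0; rewrite /iso_upto !subword_ple M hl.
exists (subword (fun k => plt k i0)), (subword (fun k => plt i0 k)),
  (subword (fun k => plt j0 k)), (letter i0), (letter j0).
split => //; split; first exact: word_split_at.
by rewrite M; apply: word_split_at.
Qed.

End Comparability.

Lemma tordinal_total (al be : tordinal) : word_prefix al be \/ word_prefix be al.
Proof.
case: (word_trichotomy al be) => [h|[h|[Y [Z [Z' [[] [[] [h _]]]]]]]]; by [left|right|].
Qed.

(** * Powers *)

Section Powers.
Variable A : Type.
Implicit Types x y z P S : word A.
Implicit Types al be ga : tordinal.

Lemma subword_pow_lt y ga (k : pos ga) (i : pos y) :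
  word_iso (subword (fun p : pos (word_pow y ga) => plt p (k, i)))
    (word_cat (word_pow y (subword (fun k' => plt k' k))) (subword (fun i' => plt i' i))).
Proof.
have lt1 (q : pos (word_pow y (subword (fun k' => plt k' k)))) :
  @plt _ (word_pow y ga) (proj1_sig q.1, q.2) (k, i) by left; exact: (proj2_sig q.1).
have lt2 (q : pos (subword (fun i' => plt i' i))) :
  @plt _ (word_pow y ga) (k, proj1_sig q) (k, i) by right; split => //; exact: (proj2_sig q).
symmetry; apply: (@iso_of_strict_mono _
  (word_cat (word_pow y (subword (fun k' => plt k' k))) (subword (fun i' => plt i' i)))
  (subword (fun p : pos (word_pow y ga) => plt p (k, i)))
  (fun p => match p with inl q => exist _ (proj1_sig q.1, q.2) (lt1 q)
                       | inr q => exist _ (k, proj1_sig q) (lt2 q) end)).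
- case=> [[a i1]|i1] [[b i2]|i2] //= h.
  + by case: h => [h|[/= h1 h2]]; [left|right; split => //=; rewrite h1].
  + by left; exact: (proj2_sig a).
  + by right.
- move=> [[k' i'] h]; case: (h) => [h1|[/= h1 h2]].
  + by exists (inl (exist _ k' h1, i')); apply: proj1_sig_inj.
  + by subst; exists (inr (exist _ i' h2)); apply: proj1_sig_inj.
- by case.
Qed.

Lemma subword_pow_ge y ga (k : pos ga) (i : pos y) :
  word_iso (subword (fun p : pos (word_pow y ga) => ~ plt p (k, i)))
    (word_cat (subword (fun i' => ~ plt i' i)) (word_pow y (subword (fun k' => plt k k')))).
Proof.
have ge1 (q : pos (subword (fun i' => ~ plt i' i))) :
  ~ @plt _ (word_pow y ga) (k, proj1_sig q) (k, i).
  by move=> [/plt_irr|[_ /= h]] //; exact: (proj2_sig q).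
have ge2 (q : pos (word_pow y (subword (fun k' => plt k k')))) :
  ~ @plt _ (word_pow y ga) (proj1_sig q.1, q.2) (k, i).
  have hk : plt k (proj1_sig q.1) := proj2_sig q.1.
  move=> [/= h|[/= h _]]; first by have /plt_irr := plt_trans hk h.
  by move: hk; rewrite h => /plt_irr.
symmetry; apply: (@iso_of_strict_mono _
  (word_cat (subword (fun i' => ~ plt i' i)) (word_pow y (subword (fun k' => plt k k'))))
  (subword (fun p : pos (word_pow y ga) => ~ plt p (k, i)))
  (fun p => match p with inl q => exist _ (k, proj1_sig q) (ge1 q)
                       | inr q => exist _ (proj1_sig q.1, q.2) (ge2 q) end)).
- case=> [i1|[a i1]] [i2|[b i2]] //= h.
  + by right.
  + by left; exact: (proj2_sig b).
  + by case: h => [h|[/= h1 h2]]; [left|right; split => //=; rewrite h1].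
- move=> [[k' i'] h]; case: (plt_total k' k) => [h1|[h1|h1]].
  + by case: h; left.
  + subst; have h2 : ~ plt i' i by move=> h2; apply: h; right.
    by exists (inl (exist _ i' h2)); apply: proj1_sig_inj.
  + by exists (inr (exist _ k' h1, i')); apply: proj1_sig_inj.
- by case.
Qed.

Lemma word_cat_cut (X : word A) P S : word_iso X (word_cat P S) -> nonempty S ->
  exists q : pos X, word_iso P (subword (fun p => plt p q)) /\
                    word_iso S (subword (fun p => ~ plt p q)).
Proof.
case/word_iso_maps => f [g [gf [fg [m [l m']]]]] [s0].
have cD : downclosed (fun p => in_left (f p)).
  by move=> a b h hb; apply: (@in_left_downclosed _ P S _ (f b)) => //; rewrite -m.
have : ~ (forall p, in_left (f p)) by move/(_ (g (inr s0))); rewrite fg => -[].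
case/(downclosed_least cD) => q eD; exists q.
have l' j : letter (g j) = letter j by rewrite -{2}(fg j) l.
have T := subword_transport fg gf m' l'.
split.
- rewrite -(@subword_left _ P S (fun _ => True)) // T.
  by apply: subword_ext => p; rewrite -eD; split => [[]|].
- rewrite -(@subword_right _ P S (fun _ => True)) // T.
  by apply: subword_ext => p; rewrite -eD; split => [[]|].
Qed.

Lemma tordinal_split_at ga (k : pos ga) :
  word_iso ga (ord_add (subword (fun k' => plt k' k))
                       (ord_add ord_one (subword (fun k' => plt k k')))).
Proof. by rewrite {1}(word_split_at k); case: (letter k). Qed.

Lemma word_pow_levi y P S ga : word_iso (word_pow y ga) (word_cat P S) ->
  exists g1 g2,
    (word_iso ga (ord_add g1 g2) /\ word_iso P (word_pow y g1) /\
       word_iso S (word_pow y g2)) \/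
    (exists p s, word_iso y (word_cat p s) /\ nonempty p /\ nonempty s /\
       word_iso ga (ord_add g1 (ord_add ord_one g2)) /\
       word_iso P (word_cat (word_pow y g1) p) /\ word_iso S (word_cat s (word_pow y g2))).
Proof.
move=> H; case: (classic (nonempty S)) => hS; last first.
  have E0 : ~ nonempty (word_pow y (empty_word unit)) by case/nonempty_powP => _ [[]].
  exists ga, (empty_word unit); left; do !split.
  - by rewrite /ord_add word_cat_empty_r //.
  - by rewrite H word_cat_empty_r.
  - by rewrite (word_iso_empty hS) (word_iso_empty E0).
case: (word_cat_cut H hS) => -[k i] [HP HS].
rewrite subword_pow_lt in HP; rewrite subword_pow_ge in HS.
exists (subword (fun k' => plt k' k)).
case: (classic (nonempty (subword (fun i' => plt i' i)))) => hp.
- exists (subword (fun k' => plt k k')); right.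
  exists (subword (fun i' => plt i' i)), (subword (fun i' => ~ plt i' i)).
  have ns : nonempty (subword (fun i' => ~ plt i' i)) by constructor; exists i; apply: plt_irr.
  split; last by do !split => //; apply: tordinal_split_at.
  rewrite -{1}(subword_all (fun _ : pos y => I)) (subword_cut _ (@plt_downclosed _ y i)).
  by apply: word_cat_iso; apply: subword_ext => j; split => [[]|].
- exists (ord_add ord_one (subword (fun k' => plt k k'))); left.
  do !split; first exact: tordinal_split_at.
  + by rewrite HP word_cat_empty_r.
  + rewrite HS word_pow_add word_pow1; apply: word_cat_iso => //.
    by apply: subword_all => j hj; apply: hp; constructor; exists j.
Qed.

Lemma tordinal_nonempty al : nonempty al -> exists al', word_iso al (ord_add ord_one al').
Proof. by case/(@nonempty_first_letter unit) => -[] [x' h]; exists x'. Qed.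

Lemma word_pow_nonempty x al : nonempty al ->
  exists al', word_iso (word_pow x al) (word_cat x (word_pow x al')).
Proof.
by case/tordinal_nonempty => al' h; exists al'; rewrite h word_pow_add word_pow1.
Qed.

Lemma word_prefix_pow_tail y ga g1 g2 :
  word_iso ga (ord_add g1 g2) -> word_prefix (word_pow y g2) (word_pow y ga).
Proof.
move=> E; case: (tordinal_total g2 ga) => [[r hr]|[r hr]].
  by exists (word_pow y r); rewrite hr word_pow_add.
have /no_iso_cat_mid hn : word_iso g2 (ord_add g1 (ord_add g2 r)).
  by rewrite {1}hr E /ord_add word_catA.
have -> : word_iso g2 ga by rewrite hr /ord_add word_cat_empty_r.
exact: word_prefix_refl.
Qed.

Definition tordinal_of (v : word A) : tordinal :=
  @Word unit (pos v) plt (@plt_irr _ v) (@plt_trans _ v) (@plt_total _ v) (@plt_wf _ v)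
    (@pos_countable _ v) (fun _ => tt).

(* Reading off the exponent inside [v] would embed [|v| + 1] into [|v|]. *)
Lemma word_pow_long_not_prefix u v z : nonempty u ->
  ~ word_iso v (word_cat (word_pow u (ord_add (tordinal_of v) ord_one)) z).
Proof.
move=> [u0] /word_iso_maps [f [g [gf [fg [m [l m']]]]]].
pose h (k : pos (ord_add (tordinal_of v) ord_one)) : pos (ord_add (tordinal_of v) ord_one) :=
  inl (g (inl (k, u0))).
have h_mono a b : plt a b -> plt (h a) (h b) by move=> hab; rewrite /h /= -m'; left.
by apply: (@strict_mono_nondecreasing _ _ _ h_mono (inr tt)).
Qed.

End Powers.

Lemma tordinal_add_l_cases (al mu : tordinal) :
  word_iso (ord_add al mu) mu \/
  exists rho, nonempty rho /\ word_iso (ord_add al mu) (ord_add mu rho).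
Proof.
case: (tordinal_total mu (ord_add al mu)) => [[r hr]|[r hr]].
  case: (classic (nonempty r)) => hr'; first by right; exists r.
  by left; rewrite hr (word_cat_empty_r _ hr').
have /no_iso_cat_mid hr' : word_iso mu (ord_add al (ord_add mu r)).
  by rewrite {1}hr /ord_add word_catA.
by left; rewrite {2}hr (word_cat_empty_r _ hr').
Qed.

(** * Prime words *)

Section Prime.
Variables (d : Order.disp_t) (A : orderType d).
Local Open Scope order_scope.
Implicit Types u v t P S Y Z T W : word A.

Lemma prime_nonempty u : prime_word u -> nonempty u.
Proof.
move=> [prim _]; apply: NNPP => hu.
have E0 : ~ nonempty (word_pow u (empty_word unit)) by case/nonempty_powP => _ [[]].
have /prim [h _] : word_iso u (word_pow u (empty_word unit)).
  by rewrite (word_iso_empty E0) (word_iso_empty hu).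
by move: nonempty_one; rewrite -h => -[[]].
Qed.

(* [u] cannot be a proper prefix of one of its own proper suffixes. *)
Lemma prime_suffix u P S : prime_word u ->
  word_iso u (word_cat P S) -> nonempty P -> nonempty S -> str_lt u S \/ word_iso S u.
Proof.
move=> [_ hs] H hP hS.
case: (hs S) => [|[z hz]|h]; [by exists P| |by left].
right; case: (classic (nonempty z)) => hz'.
  by case: (@no_iso_cat_mid _ u P z); rewrite // {1}H hz.
by rewrite hz word_cat_empty_r.
Qed.

Lemma str_lt_pow_cat u t T W rho :
  str_lt u t -> nonempty rho -> str_lt (word_cat (word_pow u rho) T) (word_cat t W).
Proof.
move=> h /(word_pow_nonempty u) [r' E]; rewrite E word_catA; exact: str_lt_cat.
Qed.

Lemma prime_prefix_pow u v ga : prime_word u -> prime_word v -> lex_le u v ->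
  word_prefix v (word_pow u ga) -> word_iso u v.
Proof.
move=> hu hv huv [z /word_pow_levi [g1 [g2 [[_ [E _]]|]]]].
  by case: (proj1 hv _ _ E).
move=> [p [s [E1 [np [ns [_ [E3 _]]]]]]].
have pu : word_prefix p u by exists s.
case: (classic (nonempty g1)) => ng1.
  have uv : word_prefix u v.
    case: (word_pow_nonempty u ng1) => g' E; exists (word_cat (word_pow u g') p).
    by rewrite E3 E word_catA.
  case: (prime_suffix hv E3 (nonempty_pow (prime_nonempty hu) ng1) np) => [h|h].
    by case: (str_lt_prefix h (word_prefix_trans pu uv)).
  have Eup : word_iso u p by apply: word_prefix_antisym => //; rewrite h.
  by case: (@no_iso_cat_r _ u s); rewrite // {1}E1 Eup.
have Evp : word_iso v p.
  by rewrite E3 word_cat_empty_l // => /nonempty_powP [].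
have vu : word_prefix v u by rewrite Evp.
case: huv => [uv|/str_lt_prefix //]; exact: word_prefix_antisym.
Qed.

Lemma word_pow_letter_split u Y b Z ga : nonempty u ->
  word_iso (word_pow u ga) (word_cat Y (word_cat (letter_word b) Z)) ->
  exists g1 p r, word_iso Y (word_cat (word_pow u g1) p) /\
                 word_iso u (word_cat p (word_cat (letter_word b) r)).
Proof.
move=> nu /word_pow_levi [g1 [g2 [[_ [E2 E3]]|[p [s [E1 [_ [ns [_ [E3 E4]]]]]]]]]].
- have /nonempty_powP [_ ng2] : nonempty (word_pow u g2).
    by rewrite -E3; apply: nonempty_catl; apply: nonempty_letter.
  case: (word_pow_nonempty u ng2) => g2' E; rewrite E in E3.
  case: (first_letter_prefix E3 nu) => r hr.
  by exists g1, (empty_word A), r; rewrite E2 word_cat_empty_r // word_cat_empty_l.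
- case: (first_letter_prefix E4 ns) => r hr.
  by exists g1, p, r; split => //; rewrite E1 hr.
Qed.

Lemma prime_lex_factor u v : prime_word u -> prime_word v -> lex_le u v ->
  ~ word_iso u v -> exists mu t, word_iso v (word_cat (word_pow u mu) t) /\ str_lt u t.
Proof.
move=> hu hv huv Euv.
have nu := prime_nonempty hu.
case: (word_trichotomy v (word_pow u (ord_add (tordinal_of v) ord_one))).
  by move=> /(prime_prefix_pow hu hv huv).
case=> [[z /word_pow_long_not_prefix] //|[Y [Z [Z' [a [b [hab [h1 h2]]]]]]]].
case: (word_pow_letter_split nu h2) => g1 [p [r [F1 F2]]].
have Ev : word_iso v (word_cat (word_pow u g1) (word_cat p (word_cat (letter_word a) Z))).
  by rewrite h1 F1 word_catA.
have lt_pv : b < a -> str_lt u (word_cat p (word_cat (letter_word a) Z)).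
  by move=> ba; rewrite F2; apply: str_lt_letters.
case: (ltgtP a b) => [ab|/lt_pv|//]; last first.
  by exists g1, (word_cat p (word_cat (letter_word a) Z)).
exfalso; case: (classic (nonempty g1)) => ng1.
- have hlt : str_lt (word_cat p (word_cat (letter_word a) Z)) v.
    case: (word_pow_nonempty u ng1) => g' E.
    by rewrite Ev E F2 !word_catA; apply: str_lt_letters.
  have ns : nonempty (word_cat p (word_cat (letter_word a) Z)).
    by apply: nonempty_catr; apply: nonempty_catl; apply: nonempty_letter.
  case: (prime_suffix hv Ev (nonempty_pow nu ng1) ns) => h.
  + exact: str_lt_irr (str_lt_trans h hlt).
  + by move: hlt; rewrite h; apply: str_lt_irr.
- have hlt : str_lt v u.
    by rewrite Ev word_cat_empty_l ?F2; [apply: str_lt_letters|case/nonempty_powP].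
  case: huv => [/(str_lt_prefix hlt)|h] //.
  exact: str_lt_irr (str_lt_trans h hlt).
Qed.

End Prime.

Section PrimeProduct.
Variables (d : Order.disp_t) (A : orderType d) (u v t : word A) (al be mu rho : tordinal).
Hypotheses (hu : prime_word u) (hv : prime_word v) (hal : nonempty al) (hbe : nonempty be).
Hypotheses (hvt : word_iso v (word_cat (word_pow u mu) t)) (ht : str_lt u t).
Hypotheses (hmu : word_iso (ord_add al mu) (ord_add mu rho)) (hrho : nonempty rho).

Local Notation X := (word_cat (word_pow u al) (word_pow v be)).

Lemma pow_v_factor :
  exists R, word_iso (word_pow v be) (word_cat (word_pow u mu) (word_cat t R)).
Proof.
case: (word_pow_nonempty v hbe) => be' E.
by exists (word_pow v be'); rewrite E {1}hvt word_catA.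
Qed.

Lemma cat_pow_lt_cat_v W : str_lt X (word_cat v W).
Proof.
case: pow_v_factor => R ER.
have -> : word_iso X (word_cat (word_pow u mu) (word_cat (word_pow u rho) (word_cat t R))).
  by rewrite ER -!word_catA -!word_pow_add hmu.
rewrite hvt word_catA; apply: str_lt_catl; exact: str_lt_pow_cat.
Qed.

Lemma cat_pow_lt_v : str_lt X v.
Proof.
have := cat_pow_lt_cat_v (empty_word A).
by rewrite (word_cat_empty_r v (@empty_word_empty _)).
Qed.

Lemma cat_pow_lt_pow_v : str_lt X (word_pow v be).
Proof. by case: (word_pow_nonempty v hbe) => be' E; rewrite {2}E; apply: cat_pow_lt_cat_v. Qed.

(* [S] reaches [t] after [g3 + mu] copies of [u], and [X] after [al + mu >= g3 + mu]. *)
Lemma cat_pow_suffix_in_u_block g1 g3 S : word_iso al (ord_add g1 g3) ->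
  word_iso S (word_cat (word_pow u g3) (word_pow v be)) -> str_lt X S \/ word_iso S X.
Proof.
move=> E1 E2; case: pow_v_factor => R ER.
have HS : word_iso S (word_cat (word_pow u (ord_add g3 mu)) (word_cat t R)).
  by rewrite E2 ER -word_catA -word_pow_add.
have HX : word_iso X (word_cat (word_pow u (ord_add al mu)) (word_cat t R)).
  by rewrite ER -word_catA -word_pow_add.
case: (tordinal_total (ord_add g3 mu) (ord_add al mu)) => [[r hr]|[r hr]].
- case: (classic (nonempty r)) => hr'; last first.
    by right; rewrite HS HX hr (word_cat_empty_r (ord_add g3 mu) hr').
  left; rewrite HS HX hr (word_pow_add u (ord_add g3 mu) r) word_catA; apply: str_lt_catl.
  exact: str_lt_pow_cat.
- have /no_iso_cat_mid hr' : word_iso (ord_add g3 mu) (ord_add g1 (ord_add (ord_add g3 mu) r)).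
    by rewrite {1}hr E1 /ord_add !word_catA.
  by right; rewrite HS HX hr (word_cat_empty_r (ord_add al mu) hr').
Qed.

Lemma cat_pow_proper_suffix P S : word_iso X (word_cat P S) -> nonempty P -> nonempty S ->
  str_lt X S \/ word_iso S X.
Proof.
move=> /word_cat_levi [M [[k1 k2]|[k1 k2]]] nP nS.
- case: (classic (nonempty M)) => nM; last first.
    by left; rewrite -(word_cat_empty_l S nM) -k2; apply: cat_pow_lt_pow_v.
  case: (word_pow_levi k2) => g1 [g2 [[_ [_ E3]]|[p [s [E1 [np [ns [_ [_ E4]]]]]]]]].
  + have /nonempty_powP [_ ng2] : nonempty (word_pow v g2) by rewrite -E3.
    by case: (word_pow_nonempty v ng2) => g' E; left; rewrite E3 E; apply: cat_pow_lt_cat_v.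
  + case: (prime_suffix hv E1 np ns) => h; left; rewrite E4.
    * by apply: str_lt_catr; apply: str_lt_trans cat_pow_lt_v h.
    * by rewrite h; apply: cat_pow_lt_cat_v.
- case: (classic (nonempty M)) => nM; last first.
    by left; rewrite k2 (word_cat_empty_l _ nM); apply: cat_pow_lt_pow_v.
  case: (word_pow_levi k1) => g1 [g2 [[E1 [_ E3]]|[p [s [E1 [np [ns [E2 [_ E4]]]]]]]]].
  + by apply: (cat_pow_suffix_in_u_block E1); rewrite k2 E3.
  + case: (prime_suffix hu E1 np ns) => h.
    * left; case: (word_pow_nonempty u hal) => al' Eal.
      by rewrite k2 E4 Eal !word_catA; apply: str_lt_cat.
    * apply: (cat_pow_suffix_in_u_block E2).
      by rewrite k2 E4 h word_pow_add word_pow1 word_catA.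
Qed.

Lemma pow_v_not_cat_cat_pow s : ~ word_iso (word_pow v be) (word_cat s X).
Proof.
case/word_pow_levi => h1 [h2 [[_ [_ F3]]|[p [s' [F1 [np [ns [_ [_ F4]]]]]]]]].
- have /nonempty_powP [_ nh2] : nonempty (word_pow v h2).
    by rewrite -F3; exact: nonempty_catl (nonempty_pow (prime_nonempty hu) hal).
  case: (word_pow_nonempty v nh2) => h' E.
  by apply: (str_lt_prefix cat_pow_lt_v); exists (word_pow v h'); rewrite F3 E.
- case: (prime_suffix hv F1 np ns) => h.
  + apply: (@str_lt_irr _ _ X); rewrite {2}F4.
    by apply: str_lt_catr; apply: str_lt_trans cat_pow_lt_v h.
  + by apply: (str_lt_prefix cat_pow_lt_v); exists (word_pow v h2); rewrite F4 h.
Qed.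

Lemma cat_pow_primitive : primitive X.
Proof.
move=> y ga H.
case: (word_pow_levi (word_iso_sym H)) => g1 [g2 [[E1 [_ E3]]|]].
  by case: (str_lt_prefix cat_pow_lt_pow_v); rewrite {1}E3 H; apply: word_prefix_pow_tail E1.
move=> [p [s [E1 [np [ns [E2 [_ E4]]]]]]].
have ny : nonempty y by rewrite E1; apply: nonempty_catl.
case: (classic (nonempty g2)) => ng2.
  have HX : word_iso X (word_cat (word_pow y (ord_add g1 ord_one)) (word_pow y g2)).
    by rewrite H E2 -word_pow_add /ord_add word_catA.
  have ng1 : nonempty (word_pow y (ord_add g1 ord_one)).
    by apply: nonempty_pow => //; apply: nonempty_catr; apply: nonempty_one.
  case: (cat_pow_proper_suffix HX ng1 (nonempty_pow ny ng2)) => h.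
    case: (str_lt_prefix h); rewrite H.
    apply: (@word_prefix_pow_tail _ _ _ (ord_add g1 ord_one)).
    by rewrite E2 /ord_add word_catA.
  by case: (@pow_v_not_cat_cat_pow s); rewrite -h.
have Ega : word_iso ga (ord_add g1 ord_one).
  by rewrite E2 /ord_add (word_cat_empty_r ord_one ng2).
case: (classic (nonempty g1)) => ng1.
  have [g' E] := word_pow_nonempty y ng1.
  have HX : word_iso X (word_cat (word_pow y g1) y) by rewrite H Ega word_pow_add word_pow1.
  case: (cat_pow_proper_suffix HX (nonempty_pow ny ng1) ny) => h.
    by case: (str_lt_prefix h); exists (word_cat (word_pow y g') y); rewrite HX E word_catA.
  case: (@no_iso_cat_r _ X (word_cat (word_pow y g') y)); last exact: nonempty_catr.
  by rewrite {1}HX E word_catA h.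
have Ega1 : word_iso ga ord_one by rewrite Ega /ord_add word_cat_empty_l.
by split => //; rewrite H Ega1 word_pow1.
Qed.

Lemma prime_cat_pow : prime_word X.
Proof.
split; first exact: cat_pow_primitive.
move=> S [P [nP [nS /cat_pow_proper_suffix]]] /(_ nP nS) [h|h]; [by right|left].
by exists (empty_word A); rewrite h (word_cat_empty_r X (@empty_word_empty _)).
Qed.

End PrimeProduct.

Lemma word_cat_pow_absorb A (u v t : word A) (al be mu : tordinal) :
  nonempty be -> word_iso v (word_cat (word_pow u mu) t) -> word_iso (ord_add al mu) mu ->
  word_iso (word_cat (word_pow u al) (word_pow v be)) (word_pow v be).
Proof.
move=> /(word_pow_nonempty v) [be' E] hvt hmu.
by rewrite E {1 3}hvt -!word_catA -word_pow_add hmu.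
Qed.

Theorem mainTheorem15 (d : Order.disp_t) (A : finOrderType d)
    (u v : word A) (al be : tordinal) :
  prime_word u -> prime_word v -> lex_le u v ->
  nonempty al -> nonempty be ->
  exists (w : word A) (ga : tordinal),
    prime_word w /\
    word_iso (word_cat (word_pow u al) (word_pow v be)) (word_pow w ga) /\
    ((word_iso w v /\ (word_iso ga be \/ word_iso ga (ord_add al be))) \/
     (word_iso w (word_cat (word_pow u al) (word_pow v be)) /\
      word_iso ga ord_one)).
Proof.
move=> hu hv huv hal hbe.
case: (classic (word_iso u v)) => [Euv|/(prime_lex_factor hu hv huv) [mu [t [hvt ht]]]].
  exists v, (ord_add al be); rewrite Euv word_pow_add.
  by do !split => //; left; split; last right.
case: (tordinal_add_l_cases al mu) => [hmu|[rho [hrho hmu]]].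
  exists v, be; do !split => //; last by left; split; last left.
  exact: word_cat_pow_absorb hvt hmu.
exists (word_cat (word_pow u al) (word_pow v be)), ord_one.
split; first exact: prime_cat_pow hu hv hal hbe hvt ht hmu hrho.
by rewrite word_pow1; split => //; right.
Qed.
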